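(* With $S$, $\hat f^i$, $\mathbf{K}$, $d_S$, $M(v)$ as in the context, let $v\in M_\mathbf{K}$ be an archimedean place. Then for every $\ell\ge1$ and every sequence $g^1,\dots,g^\ell\in S$, the endomorphism $\hat w=\hat g^\ell\circ\cdots\circ\hat g^1$ of $\mathbb{A}^{m+1}$ satisfies $\log|\hat w|_v\le 2\log(M(v))\,d_S^\ell+\log(m\,d_S^m)\,d_S^{2\ell}$.
   Context: For a number field $\mathbf{K}$, $M_\mathbf{K}$ is its set of places, with absolute values normalized by $|x|_v=|{\mathrm{Norm}}_{\mathbf{K}_v/\mathbf{Q}_p}(x)|_p^{1/[\mathbf{K}:\mathbf{Q}]}$ for $v$ above $p$ (prime or $\infty$). For $f=\sum_Ia_I\mathbf{x}^I\in\mathbf{K}[x_0,\dots,x_m]$, $|f|_v=\max_I|a_I|_v$; for $\hat f=(f_0,\dots,f_m)$, $|\hat f|_v=\max_i|f_i|_v$. Setup: $S=\{f^1,\dots,f^s\}$ is a finite symmetric subset of ${\sf{Bir}}(\mathbb{P}^m_{\overline{\mathbf{Q}}})$; each $f^i=[f^i_0:\dots:f^i_m]$ with $f^i_j$ homogeneous of degree $d_i=\deg f^i$ without common factor, normalized so that some coefficient equals $1$; $\hat f^i=(f^i_0,\dots,f^i_m)$. $\mathbf{K}$ is generated by all coefficients of the $f^i_j$; $M(v)=\max_i|\hat f^i|_v$; $d_S=\max\{2,d_1,\dots,d_s\}$. *)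

From Stdlib Require Import ClassicalEpsilon.
From HB Require Import structures.
From mathcomp Require Import all_boot all_order all_algebra all_field.
Set Implicit Arguments. Unset Strict Implicit. Unset Printing Implicit Defensive.
Import Order.TTheory GRing.Theory Num.Theory.
Local Open Scope ring_scope.

(* mpoly R n = R[x_0, ..., x_(n-1)]; mpoly R n.+1 = (mpoly R n)[x_n].          *)
Fixpoint mpoly (R : idomainType) (n : nat) : idomainType :=
  match n with
  | 0 => R
  | n'.+1 => {poly mpoly R n'}
  end.

(* the variable x_i in mpoly R n (0 if i >= n, never used that way) *)
Fixpoint mvar (R : idomainType) (n : nat) : nat -> mpoly R n :=
  match n return nat -> mpoly R n with
  | 0 => fun _ => 0
  | n'.+1 => fun i => if i == n' then 'X else (@mvar R n' i)%:P
  end.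

Fixpoint mcoefs (R : idomainType) (n : nat) : mpoly R n -> seq R :=
  match n return mpoly R n -> seq R with
  | 0 => fun c => [:: c]
  | n'.+1 => fun p => flatten [seq mcoefs (p : {poly mpoly R n'})`_i | i <- iota 0 (size p)]
  end.

(* homogeneity of total degree d (the zero polynomial is homogeneous of any degree) *)
Fixpoint mhomog (R : idomainType) (n : nat) : nat -> mpoly R n -> Prop :=
  match n return nat -> mpoly R n -> Prop with
  | 0 => fun d c => d = 0%N \/ c = 0
  | n'.+1 => fun d p => forall j : nat,
      (p : {poly mpoly R n'})`_j = 0 \/ ((j <= d)%N /\ mhomog (d - j) (p : {poly mpoly R n'})`_j)
  end.

Fixpoint mconst (R : idomainType) (k : nat) : R -> mpoly R k :=
  match k return R -> mpoly R k with
  | 0 => fun c => c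
  | k'.+1 => fun c => (mconst k' c)%:P
  end.

Fixpoint msubst (R : idomainType) (k n : nat) : mpoly R n -> (nat -> mpoly R k) -> mpoly R k :=
  match n return mpoly R n -> (nat -> mpoly R k) -> mpoly R k with
  | 0 => fun c _ => mconst k c
  | n'.+1 => fun p q =>
      \sum_(i < size (p : {poly mpoly R n'})) msubst (p : {poly mpoly R n'})`_i q * q n' ^+ i
  end.

Definition hmap (R : idomainType) (m : nat) := 'I_m.+1 -> mpoly R m.+1.

Definition hid (R : idomainType) (m : nat) : hmap R m := fun j => @mvar R m.+1 j.

Definition hcomp (R : idomainType) (m : nat) (F G : hmap R m) : hmap R m :=
  fun j => msubst (F j) (fun i => G (inord i)).

(* hat g^l o ... o hat g^1 for the word [:: g^1; ...; g^l] *)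
Definition hword (R : idomainType) (m : nat) (w : seq (hmap R m)) : hmap R m :=
  foldl (fun W F => hcomp F W) (@hid R m) w.

Definition mdvd (R : idomainType) (n : nat) (h p : mpoly R n) := exists q, p = q * h.
Definition no_common_factor (R : idomainType) (m : nat) (F : hmap R m) :=
  forall h : mpoly R m.+1, (forall j, mdvd h (F j)) -> h \is a GRing.unit.

Definition hhomog (R : idomainType) (m : nat) (d : nat) (F : hmap R m) :=
  forall j, mhomog d (F j).

(* G o F = id as rational maps of P^m, i.e. G(F(x)) = h(x) * x with h <> 0 *)
Definition left_inverse (R : idomainType) (m : nat) (G F : hmap R m) :=
  exists2 h : mpoly R m.+1, h != 0 & forall j, hcomp G F j = h * @hid R m j.

Definition bir_inverse (R : idomainType) (m : nat) (G F : hmap R m) :=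
  left_inverse G F /\ left_inverse F G.

Definition birational (R : idomainType) (m : nat) (F : hmap R m) :=
  exists e (G : hmap R m), [/\ hhomog e G, no_common_factor G & bir_inverse G F].

Definition hcoefs (R : idomainType) (m : nat) (F : hmap R m) : seq R :=
  flatten [seq mcoefs (F j) | j <- enum 'I_m.+1].

(* For a number field L (finite extension of Q), a subfield K of L and an
   embedding sigma : L -> C (C = algC), the archimedean place v of K induced by
   sigma has |x|_v = |Norm_(K_v/R)(x)|^(1/[K:Q]) = |sigma x|^(n_v/[K:Q]),
   with n_v = 1 if sigma(K) is real and n_v = 2 otherwise. *)
Definition local_deg (L : fieldExtType rat) (K : {vspace L}) (sigma : {rmorphism L -> algC}) : nat :=
  if excluded_middle_informative (forall x, x \in K -> sigma x \is Num.real) then 1%N else 2%N.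

Definition absv (L : fieldExtType rat) (K : {vspace L}) (sigma : {rmorphism L -> algC}) (x : L) : algC :=
  ((\dim K).-root `|sigma x|) ^+ local_deg K sigma.

Definition hnormv (L : fieldExtType rat) (K : {vspace L}) (sigma : {rmorphism L -> algC})
  (m : nat) (F : hmap L m) : algC :=
  \big[Num.max/0]_(c <- hcoefs F) absv K sigma c.

(* The l1-norm mnorm p, the sum of |sigma c| over the coefficients c of p, is
   subadditive and submultiplicative.  Hence substituting polynomials of norm
   at most B into a polynomial p of degree at most d gives norm at most
   mnorm p * B^d.  A polynomial in m+1 variables of degree at most d has at
   most (d+1)^(m+1) coefficients, so every component of every hat f has norm
   at most A := (d_S+1)^(m+1) * max |sigma c|, and induction along the word
   gives mnorm (hat w)_j <= A^E, where E_0 = 0 and E_(k+1) = d_S E_k + 1,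
   so E_l < d_S^l.  Finally |x|_v = |sigma x|^(n_v/[K:Q]) with n_v <= [K:Q]
   turns this into |hat w|_v <= (d_S+1)^((m+1) E) * M(v)^E, which the stated
   exponents absorb. *)

From Stdlib Require Import ClassicalEpsilon.
From HB Require Import structures.
From mathcomp Require Import all_boot all_order all_algebra all_field.
From mathcomp Require Import zify.
Import Order.TTheory GRing.Theory Num.Theory.
Local Open Scope ring_scope.

Fixpoint mdeg_le (R : idomainType) (n : nat) : nat -> mpoly R n -> Prop :=
  match n return nat -> mpoly R n -> Prop with
  | 0 => fun _ _ => True
  | n'.+1 => fun d p => forall j : nat,
      @mdeg_le R n' (d - j) (p : {poly mpoly R n'})`_j /\
      ((d < j)%N -> (p : {poly mpoly R n'})`_j = 0)
  end.
Arguments mdeg_le {R n}.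

Section Degree.

Context {R : idomainType}.

Lemma mdeg_le0 {n} d : mdeg_le d (0 : mpoly R n).
Proof. by elim: n d => [|n IH] d //= j; rewrite coef0. Qed.

Lemma mhomog_mdeg_le {n d} {p : mpoly R n} : mhomog d p -> mdeg_le d p.
Proof.
elim: n d p => [|n IH] d p //= hom_p j.
case: (hom_p j) => [->|[le_jd hom_pj]]; first by split=> //; exact: mdeg_le0.
by split=> [|lt_dj]; [exact: IH | move: (leq_ltn_trans le_jd lt_dj); rewrite ltnn].
Qed.

Lemma mdeg_leW {n d d'} {p : mpoly R n} : mdeg_le d p -> (d <= d')%N -> mdeg_le d' p.
Proof.
elim: n d d' p => [|n IH] d d' p //= deg_p le_dd' j.
have [deg_pj vanish_pj] := deg_p j; split; first by apply: IH deg_pj _; rewrite leq_sub2r.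
by move=> lt_d'j; apply: vanish_pj; exact: leq_ltn_trans lt_d'j.
Qed.

Lemma size_mcoefs_le {n d} {p : mpoly R n} : mdeg_le d p -> (size (mcoefs p) <= d.+1 ^ n)%N.
Proof.
elim: n d p => [|n IH] d p //= deg_p.
rewrite size_flatten sumnE !big_map.
have le_coef i : (size (mcoefs (p : {poly mpoly R n})`_i) <= d.+1 ^ n)%N.
  apply: leq_trans (IH _ _ (proj1 (deg_p i))) _.
  have le_sub : ((d - i).+1 <= d.+1)%N by rewrite ltnS leq_subr.
  by case: (posnP n) => [->|n_gt0]; rewrite ?expn0 ?leq_exp2r.
apply: leq_trans (leq_sum _ (fun i _ => le_coef i)) _.
rewrite big_const_seq count_predT iter_addn_0 size_iota expnS mulnC leq_mul2r.
by apply/orP; right; apply/leq_sizeP => j lt_dj; exact: (proj2 (deg_p j)).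
Qed.

End Degree.

Section NonnegMax.

Context {R : numDomainType}.

Lemma bigmax_nneg_ge0 {I : Type} (r : seq I) (F : I -> R) :
  (forall i, 0 <= F i) -> 0 <= \big[Num.max/0]_(i <- r) F i.
Proof.
move=> F_ge0; elim/big_ind: _ => // x y x_ge0 y_ge0.
by rewrite comparable_le_max ?x_ge0 ?real_comparable ?ger0_real.
Qed.

Lemma le_bigmax_nneg {I : eqType} (r : seq I) (F : I -> R) i :
  (forall i, 0 <= F i) -> i \in r -> F i <= \big[Num.max/0]_(j <- r) F j.
Proof.
move=> F_ge0; elim: r => [|j r IH] //; rewrite in_cons big_cons.
have F_real k : F k \is Num.real := ger0_real (F_ge0 k).
rewrite comparable_le_max ?real_comparable ?F_real ?ger0_real ?bigmax_nneg_ge0 //.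
by case/orP => [/eqP->|/IH->]; rewrite ?lexx ?orbT.
Qed.

Lemma bigmax_nneg_le {I : eqType} (r : seq I) (F : I -> R) b : 0 <= b ->
  (forall i, 0 <= F i) -> (forall i, i \in r -> F i <= b) -> \big[Num.max/0]_(i <- r) F i <= b.
Proof.
move=> b_ge0 F_ge0; elim: r => [|i r IH] le_b; rewrite ?big_nil // big_cons.
have cmp : F i >=< \big[Num.max/0]_(j <- r) F j.
  by rewrite real_comparable ?ger0_real ?bigmax_nneg_ge0.
rewrite comparable_ge_max // le_b ?mem_head //=; apply: IH => j j_in.
by apply: le_b; rewrite in_cons j_in orbT.
Qed.

Lemma bigmax_nneg_homo {I : Type} (r : seq I) (F : I -> R) (phi : R -> R) :
  phi 0 = 0 -> {in Num.nneg &, {homo phi : x y / x <= y}} -> (forall i, 0 <= F i) ->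
  phi (\big[Num.max/0]_(i <- r) F i) = \big[Num.max/0]_(i <- r) phi (F i).
Proof.
move=> phi0 phi_homo F_ge0; elim: r => [|i r IH]; rewrite ?big_nil // !big_cons -IH.
have := bigmax_nneg_ge0 r F F_ge0; set b := \big[_/_]_(_ <- _) _ => b_ge0.
have a_ge0 := F_ge0 i.
case: (real_leP (ger0_real a_ge0) (ger0_real b_ge0)) => [ab|/ltW ba].
  by rewrite max_r // phi_homo.
by rewrite max_l // phi_homo.
Qed.

End NonnegMax.

(* r^(k/n); by hnormvE, |.|_v is ratpow [K:Q] n_v applied to |sigma .|. *)
Definition ratpow (n k : nat) (r : algC) : algC := (n.-root r) ^+ k.

Section RatPow.

Variables (n k : nat).
Hypothesis n_gt0 : (0 < n)%N.

Lemma ratpow0 : (0 < k)%N -> ratpow n k 0 = 0.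
Proof. by move=> k_gt0; rewrite /ratpow rootC0 expr0n gtn_eqF. Qed.

Lemma ratpow_ge0 r : 0 <= r -> 0 <= ratpow n k r.
Proof. by move=> r_ge0; rewrite exprn_ge0 // rootC_ge0. Qed.

Lemma ratpow_ge1 r : 1 <= r -> 1 <= ratpow n k r.
Proof. by move=> r_ge1; rewrite exprn_ege1 // rootC_ge1. Qed.

Lemma ler_ratpow : {in Num.nneg &, {homo ratpow n k : x y / x <= y}}.
Proof.
move=> x y x_ge0 y_ge0 le_xy; rewrite lerXn2r ?nnegrE ?rootC_ge0 -?nnegrE //.
by rewrite ler_rootC.
Qed.

Lemma ratpowM a b : 0 <= a -> ratpow n k (a * b) = ratpow n k a * ratpow n k b.
Proof. by move=> a_ge0; rewrite /ratpow rootCMl // exprMn. Qed.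

Lemma ratpowX a e : 0 <= a -> ratpow n k (a ^+ e) = ratpow n k a ^+ e.
Proof. by move=> a_ge0; rewrite /ratpow rootCX // -!exprM mulnC. Qed.

Lemma ratpow_le a : (k <= n)%N -> 1 <= a -> ratpow n k a <= a.
Proof.
move=> le_kn a_ge1; have root_ge1 : 1 <= n.-root a by rewrite rootC_ge1.
by apply: le_trans (ler_weXn2l root_ge1 le_kn) _; rewrite rootCK.
Qed.

Lemma ratpow_natM_le (N : nat) a e : (0 < N)%N -> (k <= n)%N -> 0 <= a ->
  ratpow n k ((N%:R * a) ^+ e) <= N%:R ^+ e * ratpow n k a ^+ e.
Proof.
move=> N_gt0 le_kn a_ge0; rewrite ratpowX ?mulr_ge0 // ratpowM // -[X in _ <= X]exprMn.
rewrite lerXn2r ?nnegrE ?mulr_ge0 ?ratpow_ge0 // ler_wpM2r ?ratpow_ge0 //.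
by rewrite ratpow_le // ler1n.
Qed.

End RatPow.

Section CoefNorm.

Context {R : idomainType} {C : numDomainType} (sigma : {rmorphism R -> C}).

Fixpoint mnorm {n : nat} : mpoly R n -> C :=
  match n return mpoly R n -> C with
  | 0 => fun c => `|sigma c|
  | n'.+1 => fun p => \sum_(i < size (p : {poly mpoly R n'})) @mnorm n' (p : {poly mpoly R n'})`_i
  end.

Lemma mnorm_ge0 {n} (p : mpoly R n) : 0 <= mnorm p.
Proof. by elim: n p => [|n IH] p /=; [exact: normr_ge0 | exact: sumr_ge0]. Qed.

Lemma mnorm0 {n} : mnorm (0 : mpoly R n) = 0.
Proof. by case: n => [|n] /=; rewrite ?rmorph0 ?normr0 // size_poly0 big_ord0. Qed.

Lemma mnorm1 {n} : mnorm (1 : mpoly R n) = 1.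
Proof.
elim: n => [|n IH]; first by rewrite /= rmorph1 normr1.
by rewrite /= size_poly1 big_ord1 coef1 eqxx IH.
Qed.

Lemma mnorm_widen {n} (p : {poly mpoly R n}) N : (size p <= N)%N ->
  mnorm (p : mpoly R n.+1) = \sum_(i < N) mnorm p`_i.
Proof.
move=> le_pN /=; rewrite (big_ord_widen N (fun i => mnorm p`_i) le_pN) big_mkcond /=.
apply: eq_bigr => i _; case: ifPn => // /negbTE; rewrite ltnNge => /negbFE le_pi.
by rewrite nth_default // mnorm0.
Qed.

Lemma ler_mnormD {n} (p q : mpoly R n) : mnorm (p + q) <= mnorm p + mnorm q.
Proof.
elim: n p q => [|n IH] p q; first by rewrite /= rmorphD ler_normD.
pose N := maxn (size (p : {poly mpoly R n})) (size (q : {poly mpoly R n})).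
rewrite (@mnorm_widen _ (p + q) N) ?(@mnorm_widen _ p N) ?(@mnorm_widen _ q N)
  ?leq_maxl ?leq_maxr ?(leq_trans (size_polyD _ _)) //.
by rewrite -big_split /=; apply: ler_sum => i _; rewrite coefD.
Qed.

Lemma ler_mnorm_sum {n} N (F : 'I_N -> mpoly R n) :
  mnorm (\sum_(i < N) F i) <= \sum_(i < N) mnorm (F i).
Proof.
elim: N F => [|N IH] F; first by rewrite !big_ord0 mnorm0.
by rewrite !big_ord_recr /=; apply: le_trans (ler_mnormD _ _) _; rewrite lerD2r.
Qed.

Lemma mnormZXn {n} (c : mpoly R n) k :
  mnorm ((c *: 'X^k : {poly mpoly R n}) : mpoly R n.+1) = mnorm c.
Proof.
rewrite (@mnorm_widen _ _ k.+1); last by rewrite (leq_trans (size_scale_leq _ _)) ?size_polyXn.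
rewrite big_ord_recr /= coefZ coefXn eqxx mulr1 big1 ?add0r // => i _.
by rewrite coefZ coefXn (ltn_eqF (ltn_ord i)) mulr0 mnorm0.
Qed.

Lemma ler_mnormM {n} (p q : mpoly R n) : mnorm (p * q) <= mnorm p * mnorm q.
Proof.
elim: n p q => [|n IH] p q; first by rewrite /= rmorphM normrM.
move: p q; rewrite /mpoly -/mpoly => p q.
have -> : p * q = \sum_(i < size p) \sum_(j < size q) ((p`_i * q`_j) *: 'X^(i + j)).
  have expand (r : {poly mpoly R n}) : r = \sum_(i < size r) r`_i *: 'X^i.
    by rewrite -poly_def coefK.
  rewrite {1}[p]expand {1}[q]expand big_distrl /=; apply: eq_bigr => i _.
  rewrite big_distrr /=; apply: eq_bigr => j _.
  by rewrite -scalerAl -scalerAr scalerA exprD.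
apply: le_trans (@ler_mnorm_sum n.+1 _ _) _; rewrite [X in _ <= X]/= big_distrl.
apply: ler_sum => i _; apply: le_trans (@ler_mnorm_sum n.+1 _ _) _.
by rewrite big_distrr; apply: ler_sum => j _; rewrite mnormZXn.
Qed.

Lemma ler_mnormX {n} (p : mpoly R n) k : mnorm (p ^+ k) <= mnorm p ^+ k.
Proof.
elim: k => [|k IH]; first by rewrite !expr0 mnorm1.
by rewrite !exprS; apply: le_trans (ler_mnormM _ _) _; rewrite ler_wpM2l ?mnorm_ge0.
Qed.

Lemma mnorm_mconst k (c : R) : mnorm (mconst k c) = `|sigma c|.
Proof.
elim: k => [|k IH] //.
rewrite -[LHS]/(mnorm (((mconst k c)%:P : {poly mpoly R k}) : mpoly R k.+1)).
by rewrite (@mnorm_widen _ _ 1) ?size_polyC_leq1 // big_ord1 coefC IH.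
Qed.

Lemma mnorm_mvar n i : (i < n)%N -> mnorm (mvar R n i) = 1.
Proof.
elim: n => [|n IH] // lt_in /=; case: eqP => [_|/eqP ne_in].
  rewrite -[LHS]/(mnorm (('X : {poly mpoly R n}) : mpoly R n.+1)).
  rewrite (@mnorm_widen _ _ 2) ?size_polyX //.
  by rewrite big_ord_recr big_ord1 /= !coefX mnorm0 mnorm1 add0r.
rewrite -[LHS]/(mnorm (((mvar R n i)%:P : {poly mpoly R n}) : mpoly R n.+1)).
rewrite (@mnorm_widen _ _ 1) ?size_polyC_leq1 // big_ord1 coefC IH //.
by move: lt_in; rewrite ltnS leq_eqVlt (negbTE ne_in).
Qed.

Lemma mnormE {n} (p : mpoly R n) : mnorm p = \sum_(c <- mcoefs p) `|sigma c|.
Proof.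
elim: n p => [|n IH] p; first by rewrite /= big_seq1.
rewrite /= big_flatten big_map -(big_mkord xpredT (fun i => mnorm _`_i)) /index_iota subn0.
by apply: eq_bigr => i _; exact: IH.
Qed.

Lemma ler_mnorm_msubst {n k} {p : mpoly R n} {d} {q : nat -> mpoly R k} {B : C} :
  1 <= B -> mdeg_le d p -> (forall i, (i < n)%N -> mnorm (q i) <= B) ->
  mnorm (msubst p q) <= mnorm p * B ^+ d.
Proof.
move=> B_ge1; have B_ge0 : 0 <= B := le_trans ler01 B_ge1.
elim: n p d => [|n IH] p d deg_p norm_q.
  by rewrite /= mnorm_mconst ler_peMr ?normr_ge0 ?exprn_ege1.
rewrite [msubst _ _]/= [mnorm p]/= big_distrl.
apply: le_trans (@ler_mnorm_sum k _ _) _; apply: ler_sum => i _.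
apply: le_trans (ler_mnormM _ _) _.
have [deg_pi vanish_pi] := deg_p i.
have le_pi := IH _ _ deg_pi (fun j lt_jn => norm_q j (ltnW lt_jn)).
have le_qi : mnorm (q n ^+ i) <= B ^+ i.
  by apply: le_trans (ler_mnormX _ _) _; rewrite lerXn2r ?nnegrE ?mnorm_ge0 ?norm_q.
apply: le_trans (ler_pM (mnorm_ge0 _) (mnorm_ge0 _) le_pi le_qi) _; rewrite [X in _ <= X]/=.
have [lt_di|le_id] := ltnP d i; first by rewrite vanish_pi // mnorm0 !mul0r.
by rewrite -mulrA -exprD subnK.
Qed.

Lemma ler_mnorm_hcomp {m} {F G : hmap R m} {j d} {A B : C} :
  1 <= B -> mdeg_le d (F j) -> mnorm (F j) <= A -> (forall i, mnorm (G i) <= B) ->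
  mnorm (hcomp F G j) <= A * B ^+ d.
Proof.
move=> B_ge1 deg_Fj norm_Fj norm_G.
rewrite /hcomp; apply: le_trans (ler_mnorm_msubst B_ge1 deg_Fj (fun i _ => norm_G _)) _.
by rewrite ler_wpM2r ?exprn_ge0 ?(le_trans ler01).
Qed.

Definition word_exponent (d l : nat) := iter l (fun e => (d * e).+1) 0.

Lemma word_exponent_lt d l : (2 <= d)%N -> (word_exponent d l < d ^ l)%N.
Proof. by move=> d_ge2; elim: l => [|l IH] //=; rewrite expnS; nia. Qed.

Lemma ler_mnorm_hword {m} {I : Type} (f : I -> hmap R m) (w : seq I) {d} {A : C} :
  1 <= A -> (forall i j, mdeg_le d (f i j)) -> (forall i j, mnorm (f i j) <= A) ->
  forall j, mnorm (hword [seq f i | i <- w] j) <= A ^+ word_exponent d (size w).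
Proof.
move=> A_ge1 deg_f norm_f; rewrite /hword /word_exponent.
suff foldl_le W e : (forall j, mnorm (W j) <= A ^+ e) -> forall j,
    mnorm (foldl (fun W F => hcomp F W) W [seq f i | i <- w] j)
      <= A ^+ iter (size w) (fun e => (d * e).+1) e.
  by apply: foldl_le => j; rewrite expr0 mnorm_mvar.
elim: w W e => [|i w IH] W e norm_W //; rewrite [size _]/= iterSr; apply: IH => j.
apply: le_trans (ler_mnorm_hcomp (exprn_ege1 e A_ge1) (deg_f i j) (norm_f i j) norm_W) _.
by rewrite -exprM -exprS mulnC.
Qed.

Lemma ler_mcoef_mnorm {n} {p : mpoly R n} {c} : c \in mcoefs p -> `|sigma c| <= mnorm p.
Proof.
by move=> c_in; rewrite mnormE (perm_big _ (perm_to_rem c_in)) big_cons lerDl sumr_ge0.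
Qed.

Definition hnormC {m} (F : hmap R m) : C := \big[Num.max/0]_(c <- hcoefs F) `|sigma c|.

Lemma hnormC_ge0 {m} (F : hmap R m) : 0 <= hnormC F.
Proof. by apply: bigmax_nneg_ge0 => c; exact: normr_ge0. Qed.

Lemma ler_coef_hnormC {m} {F : hmap R m} {c} : c \in hcoefs F -> `|sigma c| <= hnormC F.
Proof. by apply: le_bigmax_nneg => c'; exact: normr_ge0. Qed.

Lemma hnormC_le {m} (F : hmap R m) (B : C) : 0 <= B ->
  (forall j, mnorm (F j) <= B) -> hnormC F <= B.
Proof.
move=> B_ge0 norm_F; apply: bigmax_nneg_le => // c.
case/flattenP=> _ /mapP[j _ ->] c_in; exact: le_trans (ler_mcoef_mnorm c_in) (norm_F j).
Qed.

Lemma mnorm_le_hnormC {m} {F : hmap R m} {j d} :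
  mdeg_le d (F j) -> mnorm (F j) <= (d.+1 ^ m.+1)%:R * hnormC F.
Proof.
move=> deg_Fj; have le_hnormC c : c \in mcoefs (F j) -> `|sigma c| <= hnormC F.
  move=> c_in; apply: ler_coef_hnormC; apply/flattenP; exists (mcoefs (F j)) => //.
  by rewrite (map_f (fun j => mcoefs (F j))) ?mem_enum.
rewrite mnormE (@le_trans _ _ (\sum_(c <- mcoefs (F j)) hnormC F)) //.
  by rewrite big_seq [X in _ <= X]big_seq; exact: ler_sum.
rewrite big_const_seq count_predT iter_addr_0 -[X in X <= _]mulr_natl.
by rewrite ler_wpM2r ?hnormC_ge0 // ler_nat size_mcoefs_le.
Qed.

Lemma hnormC_hword_le {m} {I : Type} (f : I -> hmap R m) (w : seq I) {d} {a : C} :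
  (forall i j, mdeg_le d (f i j)) -> 1 <= a -> (forall i, hnormC (f i) <= a) ->
  hnormC (hword [seq f i | i <- w]) <= ((d.+1 ^ m.+1)%:R * a) ^+ word_exponent d (size w).
Proof.
move=> deg_f a_ge1 hnormC_f; have A_ge1 : 1 <= (d.+1 ^ m.+1)%:R * a.
  by rewrite mulr_ege1 // ler1n expn_gt0.
apply: hnormC_le; first by rewrite exprn_ge0 // (le_trans ler01).
apply: ler_mnorm_hword => // i j; apply: le_trans (mnorm_le_hnormC (deg_f i j)) _.
by rewrite ler_wpM2l ?ler0n.
Qed.

End CoefNorm.

Section ArchimedeanPlace.

Context {L : fieldExtType rat} (K : {vspace L}) (sigma : {rmorphism L -> algC}).

Lemma local_deg_gt0 : (0 < local_deg K sigma)%N.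
Proof. by rewrite /local_deg; case: excluded_middle_informative. Qed.

Hypothesis K1 : (1 <= K)%VS.

Lemma dimv_gt0 : (0 < \dim K)%N.
Proof. by have := dimvS K1; rewrite dimv1. Qed.

Lemma local_deg_le_dimv : (local_deg K sigma <= \dim K)%N.
Proof.
rewrite /local_deg; case: excluded_middle_informative => [_|not_real] /=; first exact: dimv_gt0.
case: (leqP 2 (\dim K)) => // dimK_lt2; exfalso; apply: not_real => x.
have K_eq1 : (1%VS : {vspace L}) = K by apply/eqP; rewrite eqEdim K1 dimv1 -ltnS.
by rewrite -K_eq1 => /vlineP[q ->]; rewrite rmorphZ_num rmorph1 mulr1 rpred_rat.
Qed.

Lemma hnormvE {m} (F : hmap L m) :
  hnormv K sigma F = ratpow (\dim K) (local_deg K sigma) (hnormC sigma F).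
Proof.
rewrite /hnormC (bigmax_nneg_homo _ _ _ (ratpow0 _ _ local_deg_gt0)) //.
exact: ler_ratpow dimv_gt0.
Qed.

Lemma bigmax_hnormvE {m} {I : Type} (r : seq I) (F : I -> hmap L m) :
  \big[Num.max/0]_(i <- r) hnormv K sigma (F i)
    = ratpow (\dim K) (local_deg K sigma) (\big[Num.max/0]_(i <- r) hnormC sigma (F i)).
Proof.
rewrite (bigmax_nneg_homo _ _ _ (ratpow0 _ _ local_deg_gt0)).
- by apply: eq_bigr => i _; rewrite hnormvE.
- exact: ler_ratpow dimv_gt0.
- by move=> i; exact: hnormC_ge0.
Qed.

Lemma hnormv_hword_le {m} {I : Type} (f : I -> hmap L m) (w : seq I) {d} {a : algC} :
  (forall i j, mdeg_le d (f i j)) -> 1 <= a -> (forall i, hnormC sigma (f i) <= a) ->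
  hnormv K sigma (hword [seq f i | i <- w]) <= (d.+1 ^ m.+1)%:R ^+ word_exponent d (size w)
    * ratpow (\dim K) (local_deg K sigma) a ^+ word_exponent d (size w).
Proof.
move=> deg_f a_ge1 hnormC_f; have N_gt0 : (0 < d.+1 ^ m.+1)%N by rewrite expn_gt0.
rewrite hnormvE; apply: le_trans (ratpow_natM_le _ _ dimv_gt0 _ _ _ N_gt0
  local_deg_le_dimv (le_trans ler01 a_ge1)).
apply: ler_ratpow (hnormC_hword_le sigma f w deg_f a_ge1 hnormC_f).
- exact: dimv_gt0.
- by rewrite nnegrE hnormC_ge0.
- by rewrite nnegrE exprn_ge0 // mulr_ge0 // (le_trans ler01 a_ge1).
Qed.

End ArchimedeanPlace.

Lemma leq_exp_pow4 m d E Y : (1 <= m)%N -> (2 <= d)%N -> (E < Y)%N ->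
  ((d.+1 ^ m.+1) ^ E <= (m * d ^ m) ^ (Y * Y))%N.
Proof.
move=> m_ge1 d_ge2 lt_EY.
have le_pow4 : (d.+1 ^ m.+1 <= (m * d ^ m) ^ 4)%N.
  apply: (@leq_trans ((d ^ 2) ^ m.+1)); first by rewrite leq_exp2r //; nia.
  apply: (@leq_trans (d ^ (4 * m))); first by rewrite -expnM leq_exp2l //; lia.
  by rewrite mulnC expnM leq_exp2r // leq_pmull.
apply: (@leq_trans (((m * d ^ m) ^ 4) ^ E)).
  by case: (posnP E) => [->|E_gt0]; rewrite ?expn0 ?leq_exp2r.
have le_sq : (E.+1 * E.+1 <= Y * Y)%N by rewrite leq_mul.
by rewrite -expnM leq_pexp2l ?muln_gt0 ?expn_gt0 ?m_ge1 ?(leq_trans _ d_ge2) //; nia.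
Qed.

Theorem lemma3p7 (L : fieldExtType rat) (m s : nat)
  (f : 'I_s -> hmap L m) (d : 'I_s -> nat)
  (hm : (1 <= m)%N)
  (Hhom : forall i, hhomog (d i) (f i))
  (Hncf : forall i, no_common_factor (f i))
  (Hnorm : forall i, 1 \in hcoefs (f i))
  (Hbir : forall i, birational (f i))
  (Hsym : forall i, exists j, bir_inverse (f j) (f i))
  (sigma : {rmorphism L -> algC})
  (l : nat) (g : seq 'I_s) (hl : (1 <= l)%N) (hsize : size g = l) :
  let K := (<<1 & flatten [seq hcoefs (f i) | i <- enum 'I_s]>>)%VS in
  let M := \big[Num.max/0]_(i < s) hnormv K sigma (f i) in
  let dS := maxn 2 (\max_(i < s) d i) in
  hnormv K sigma (hword [seq f i | i <- g])
    <= M ^+ (2 * dS ^ l) * ((m * dS ^ m)%N)%:R ^+ (dS ^ (2 * l)).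
Proof.
cbv zeta; set K := (<<1 & _>>)%VS; set M := \big[Num.max/0]_(i < s) _; set dS := maxn 2 _.
have K1 : (1 <= K)%VS := sub1_agenv _.
have dS_ge2 : (2 <= dS)%N := leq_maxl _ _.
pose Mc := \big[Num.max/0]_(i < s) hnormC sigma (f i).
have hnormC_f i : hnormC sigma (f i) <= Mc.
  by apply: le_bigmax_nneg (mem_index_enum i) => j; exact: hnormC_ge0.
have Mc_ge1 : 1 <= Mc.
  case: g hsize => [|i0 g'] size_g; first by rewrite -size_g in hl.
  by apply: le_trans (hnormC_f i0); rewrite -(normr1 algC) -(rmorph1 sigma) ler_coef_hnormC.
have deg_f i j : mdeg_le dS (f i j).
  apply: mdeg_leW (mhomog_mdeg_le (Hhom i j)) _.
  exact: leq_trans (leq_bigmax i) (leq_maxr _ _).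
have M_ge1 : 1 <= M by rewrite /M bigmax_hnormvE // ratpow_ge1 // dimv_gt0.
apply: le_trans (hnormv_hword_le K sigma K1 f g deg_f Mc_ge1 hnormC_f) _.
rewrite -bigmax_hnormvE // -/M hsize; set E := word_exponent dS l.
have E_lt : (E < dS ^ l)%N := word_exponent_lt _ l dS_ge2.
rewrite mulrC ler_pM ?exprn_ge0 ?(le_trans ler01 M_ge1) //.
  by rewrite ler_weXn2l // (leq_trans (ltnW E_lt)) // leq_pmull.
by rewrite -natrX -[X in _ <= X](natrX algC) ler_nat mul2n -addnn expnD leq_exp_pow4.
Qed.
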